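(* Let $H \le G$ be finite groups such that the interval $[H,G]$ is a distributive lattice. Then there exists an irreducible complex representation $V$ of $G$ such that $G_{(V^H)} = H$.
   Context: For subgroups $H \le G$, the interval $[H,G]$ is the set of subgroups $K$ with $H \le K \le G$, ordered by inclusion; it is a lattice with meet $K_1 \wedge K_2 = K_1 \cap K_2$ and join $K_1 \vee K_2 = \langle K_1, K_2\rangle$. For a representation $W$ of a group $G$, a subgroup $K \le G$ and a subspace $X \subseteq W$: the fixed-point subspace is $W^K = \{w \in W : kw = w \ \forall k \in K\}$, and the pointwise stabilizer is $G_{(X)} = \{g \in G : gx = x \ \forall x \in X\}$. *)

From HB Require Import structures.
From mathcomp Require Import all_boot all_order all_algebra all_fingroup all_solvable all_field all_character.
Set Implicit Arguments. Unset Strict Implicit. Unset Printing Implicit Defensive.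

Local Open Scope group_scope.

(* The interval [H, G] of subgroups is a distributive lattice:
   meet = intersection, join = generated subgroup (K1 <*> K2).
   A lattice is distributive iff meet distributes over join. *)
Definition interval_distributive (gT : finGroupType) (H G : {group gT}) : Prop :=
  forall K1 K2 K3 : {group gT},
    H \subset K1 -> K1 \subset G ->
    H \subset K2 -> K2 \subset G ->
    H \subset K3 -> K3 \subset G ->
    K1 :&: (K2 <*> K3) = (K1 :&: K2) <*> (K1 :&: K3).

From HB Require Import structures.
From mathcomp Require Import all_boot all_order all_algebra all_fingroup all_solvable all_field all_character.
Set Implicit Arguments. Unset Strict Implicit. Unset Printing Implicit Defensive.
Import GRing.Theory Num.Theory Order.TTheory.
Local Open Scope ring_scope.

(* For a character chi of G and L <= G, '['Res[L] chi, 1] is the dimension of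
   the L-fixed space of a representation affording chi.  If this dimension is
   positive at H and strictly smaller at every K with H < K <= G (chi
   "separates" H), then the pointwise stabilizer of V^H is exactly H, since the
   stabilizer fixes V^H and hence has fixed space of the same dimension.
   A separating irreducible chi is built by induction on |G|: take an atom A of
   the interval [H, G] and M maximal in [H, G] with M :&: A = H.  Inducing to G
   a character of M separating H gives a character whose fixed dimension
   already drops from H to A, hence so does some irreducible constituent chi_i.
   By distributivity every K > H with K :&: M = H contains A, so the dimension
   drops at K; any other K meets M in some H < K :&: M, where the drop is
   inherited from the separating constituent of 'Res[M] chi_i. *)

Section FixedDimension.

Variable gT : finGroupType.

Definition fix_proj (G : {group gT}) n (rG : mx_representation algC G n)
    (L : {set gT}) : 'M[algC]_n :=
  #|L|%:R^-1 *: \sum_(x in L) rG x.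

Lemma fixed_mulmx_fix_proj (G L : {group gT}) n
    (rG : mx_representation algC G n) m (W : 'M_(m, n)) :
  (forall x, x \in L -> W *m rG x = W) -> W *m fix_proj rG L = W.
Proof.
move=> fixW; rewrite /fix_proj -scalemxAr mulmx_sumr (eq_bigr (fun _ => W)) //.
by rewrite sumr_const -scaler_nat scalerA mulVf ?neq0CG // scale1r.
Qed.

Lemma fix_proj_mulmx_repr (G L : {group gT}) n
    (rG : mx_representation algC G n) y :
  L \subset G -> y \in L -> fix_proj rG L *m rG y = fix_proj rG L.
Proof.
move=> sLG Ly; rewrite /fix_proj -scalemxAl mulmx_suml; congr (_ *: _).
rewrite (reindex (fun x => x * y^-1)%g) /=; last first.
  by exists (fun x => x * y)%g => z _; rewrite ?mulgKV ?mulgK.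
apply: eq_big => [x | x Lx]; first by rewrite groupMr ?groupV.
by rewrite -repr_mxM ?(subsetP sLG) // mulgKV.
Qed.

Lemma mxtrace_fix_proj (G L : {group gT}) n (rG : mx_representation algC G n) :
  L \subset G -> \tr (fix_proj rG L) = '['Res[L] (cfRepr rG), 1].
Proof.
move=> sLG; rewrite cfdotE /fix_proj mxtraceZ raddf_sum /=; congr (_ * _).
apply: eq_bigr => x Lx; rewrite cfResE // cfun1E Lx conjC1 mulr1 cfunE.
by rewrite (subsetP sLG).
Qed.

(* Both projections restrict to the identity on the other's image, so their
   products in the two orders are P_K and P_H, which have the same trace. *)
Lemma cfdot_Res1_rstab_rfix (G H K : {group gT}) n
    (rG : mx_representation algC G n) :
  H \subset K -> K \subset rstab rG (rfix_mx rG H) ->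
  '['Res[K] (cfRepr rG), 1] = '['Res[H] (cfRepr rG), 1].
Proof.
move=> sHK sKstab; have sKG := subset_trans sKstab (rstab_sub _ _).
have sHG := subset_trans sHK sKG.
rewrite -!mxtrace_fix_proj //.
have PKH : fix_proj rG K *m fix_proj rG H = fix_proj rG K.
  by apply: fixed_mulmx_fix_proj => x Hx; rewrite fix_proj_mulmx_repr ?(subsetP sHK).
have sPH : (fix_proj rG H <= rfix_mx rG H)%MS.
  by apply/rfix_mxP => x Hx; rewrite fix_proj_mulmx_repr.
have PHK : fix_proj rG H *m fix_proj rG K = fix_proj rG H.
  apply: fixed_mulmx_fix_proj; apply/rfix_mxP.
  by apply: submx_trans sPH _; rewrite -rfix_mx_rstabC.
by rewrite -PKH mxtrace_mulC PHK.
Qed.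

Lemma rstab_rfix_mx_eq (G H : {group gT}) n (rG : mx_representation algC G n) :
  H \subset G ->
  (forall K : {group gT}, H \proper K -> K \subset G ->
     '['Res[K] (cfRepr rG), 1] < '['Res[H] (cfRepr rG), 1]) ->
  rstab rG (rfix_mx rG H) = H.
Proof.
move=> sHG drop; set K := rstab_group rG (rfix_mx rG H).
have sHK : H \subset K by rewrite /= rfix_mx_rstabC.
apply/eqP; rewrite eqEsubset sHK andbT; apply: contraT => nsKH.
have := drop K _ (rstab_sub _ _); rewrite properE sHK nsKH => /(_ isT).
by rewrite (cfdot_Res1_rstab_rfix sHK) ?ltxx.
Qed.

Lemma cfdot_Res1_avg (G L : {group gT}) (phi : 'CF(G)) :
  L \subset G -> '['Res[L] phi, 1] = #|L|%:R^-1 * \sum_(x in L) phi x.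
Proof.
move=> sLG; rewrite cfdotE; congr (_ * _); apply: eq_bigr => x Lx.
by rewrite cfResE // cfun1E Lx conjC1 mulr1.
Qed.

Lemma cfdot_Res1_ge0 (G L : {group gT}) (chi : 'CF(G)) :
  chi \is a character -> 0 <= '['Res[L] chi, 1].
Proof. by move=> Nchi; rewrite natr_ge0 ?Cnat_cfdot_char ?cfRes_char ?cfun1_char. Qed.

Lemma cfdot_Res1_le (G H K : {group gT}) (chi : 'CF(G)) :
  chi \is a character -> H \subset K -> K \subset G ->
  '['Res[K] chi, 1] <= '['Res[H] chi, 1].
Proof.
move=> Nchi sHK sKG; rewrite !cfdot_Res_l -(cfIndInd _ sKG sHK).
have N1 : 'Ind[K] (1 : 'CF(H)) \is a character by rewrite cfInd_char ?cfun1_char.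
have K1 : 0 \in irr_constt ('Ind[K] (1 : 'CF(H))).
  by rewrite irr_consttE irr0 -Frobenius_reciprocity cfRes_cfun1 cfnorm1 oner_eq0.
have [xi Nxi ->] := constt_charP _ N1 K1.
by rewrite irr0 linearD /= cfdotDr lerDl natr_ge0 ?Cnat_cfdot_char ?cfInd_char.
Qed.

Lemma cfdot_Res1_sub_irr (G L1 L2 : {group gT}) (phi : 'CF(G)) :
  '['Res[L1] phi, 1] - '['Res[L2] phi, 1] =
  \sum_i '[phi, 'chi_i] * ('['Res[L1] 'chi_i, 1] - '['Res[L2] 'chi_i, 1]).
Proof.
have expand (L : {group gT}) :
    '['Res[L] phi, 1] = \sum_i '[phi, 'chi_i] * '['Res[L] 'chi_i, 1].
  rewrite {1}[phi]cfun_sum_cfdot linear_sum cfdot_suml; apply: eq_bigr => i _.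
  by rewrite linearZ cfdotZl.
by rewrite !expand -sumrB; apply: eq_bigr => i _; rewrite mulrBr.
Qed.

Lemma cfdot_Res1_ltP (G L1 L2 : {group gT}) (phi : 'CF(G)) :
  phi \is a character -> L1 \subset L2 -> L2 \subset G ->
  reflect (exists i, '[phi, 'chi_i] != 0 /\
                     '['Res[L2] 'chi_i, 1] < '['Res[L1] 'chi_i, 1])
          ('['Res[L2] phi, 1] < '['Res[L1] phi, 1]).
Proof.
move=> Nphi s12 s2G; rewrite -subr_gt0 cfdot_Res1_sub_irr.
pose term i := '[phi, 'chi_i] * ('['Res[L1] 'chi_i, 1] - '['Res[L2] 'chi_i, 1]).
have term_ge0 i : 0 <= term i.
  apply: mulr_ge0; first by rewrite natr_ge0 ?Cnat_cfdot_char_irr.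
  by rewrite subr_ge0 cfdot_Res1_le ?irr_char.
have term_gt0 i : (0 < term i) =
    ('[phi, 'chi_i] != 0) && ('['Res[L2] 'chi_i, 1] < '['Res[L1] 'chi_i, 1]).
  rewrite lt_def mulf_eq0 negb_or subr_eq0 term_ge0 andbT -subr_gt0 lt_def.
  by rewrite subr_eq0 subr_ge0 cfdot_Res1_le ?irr_char // andbT eq_sym.
apply: (iffP idP) => [|[i [nz_i lt_i]]].
  rewrite lt_def => /andP[/eqP/(psumr_neq0P (fun i _ => term_ge0 i))[i] + _].
  by rewrite /= term_gt0 => /andP[nz_i lt_i]; exists i.
rewrite (bigD1 i) //= ltr_wpDr ?term_gt0 ?nz_i //.
by apply: sumr_ge0 => k _; apply: term_ge0.
Qed.

Lemma sum_cfun_conjg (M L : {group gT}) (theta : 'CF(M)) y :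
  \sum_(x in L) theta (x ^ y)%g =
    #|(L :^ y :&: M)%g|%:R * '['Res[(L :^ y :&: M)%G] theta, 1].
Proof.
rewrite cfdot_Res1_avg ?subsetIr // mulVKf ?neq0CG //.
rewrite (reindex (conjg^~ y^-1)%g) /=; last first.
  by exists (conjg^~ y)%g => z _; rewrite ?conjgKV ?conjgK.
rewrite (eq_bigl (fun z => z \in (L :^ y)%g)) => [|z]; last by rewrite mem_conjg.
under eq_bigr => z _ do rewrite conjgKV.
rewrite [LHS](big_setID M) /= [X in _ + X]big1 ?addr0 // => z.
by rewrite inE => /andP[nMz _]; apply: cfun0.
Qed.

Lemma cfdot_Res1_Ind (G M L : {group gT}) (theta : 'CF(M)) :
  M \subset G -> L \subset G ->
  '['Res[L] ('Ind[G] theta), 1] =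
    #|M|%:R^-1 * \sum_(y in G) (#|(L :^ y :&: M)%g|%:R / #|L|%:R) *
                               '['Res[(L :^ y :&: M)%G] theta, 1].
Proof.
move=> sMG sLG; rewrite cfdot_Res1_avg //.
under eq_bigr => x _ do rewrite cfIndE //.
rewrite -mulr_sumr mulrCA exchange_big /= mulr_sumr; congr (_ * _).
by apply: eq_bigr => y _; rewrite sum_cfun_conjg mulrA [_^-1 * _]mulrC.
Qed.

Lemma leq_mul_card_setI (H A M : {group gT}) :
  H \subset A -> (#|A :&: M| * #|H| <= #|A| * #|H :&: M|)%N.
Proof.
move=> sHA; rewrite mul_cardG; apply: leq_mul.
  by apply: subset_leq_card; rewrite mul_subG ?subsetIl.
by rewrite setIAC [A :&: H]setIC (setIidPl sHA).
Qed.

(* Termwise comparison of the formula of cfdot_Res1_Ind for A and for H: the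
   term y = 1 drops by the factor |H|/|A|, and no term increases. *)
Lemma cfdot_Res1_Ind_lt (G M H A : {group gT}) (theta : 'CF(M)) :
  theta \is a character -> H \subset M -> M \subset G -> A \subset G ->
  A :&: M = H -> H \proper A -> 0 < '['Res[H] theta, 1] ->
  '['Res[A] ('Ind[G] theta), 1] < '['Res[H] ('Ind[G] theta), 1].
Proof.
move=> Ntheta sHM sMG sAG AM pHA theta_H; have sHA := proper_sub pHA.
rewrite !cfdot_Res1_Ind ?(subset_trans sHA) // ltr_pM2l ?invr_gt0 ?gt0CG //.
rewrite (bigD1 1%g) // [X in _ < X](bigD1 1%g) //= !conjsg1 AM (setIidPl sHM).
apply: ltr_leD.
  rewrite divff ?neq0CG // mul1r gtr_pMl // ltr_pdivrMr ?gt0CG // mul1r.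
  by rewrite ltr_nat proper_card.
apply: ler_sum => y _; apply: ler_pM; rewrite ?divr_ge0 ?ler0n //.
- by rewrite cfdot_Res1_ge0.
- rewrite ler_pdivrMr ?gt0CG // mulrAC ler_pdivlMr ?gt0CG // -!natrM ler_nat.
  rewrite [X in (_ <= X)%N]mulnC -(cardJg A y) -(cardJg H y).
  by rewrite leq_mul_card_setI ?conjSg.
- by rewrite cfdot_Res1_le ?subsetIr ?setSI ?conjSg.
Qed.

Definition separates (G H : {group gT}) (chi : 'CF(G)) : Prop :=
  0 < '['Res[H] chi, 1] /\
  forall K : {group gT}, H \proper K -> K \subset G ->
    '['Res[K] chi, 1] < '['Res[H] chi, 1].

Lemma interval_distributiveS (G H M : {group gT}) :
  M \subset G -> interval_distributive H G -> interval_distributive H M.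
Proof.
move=> sMG dist K1 K2 K3 sHK1 sK1M sHK2 sK2M sHK3 sK3M.
by apply: dist; rewrite // (subset_trans _ sMG).
Qed.

Section Interval.

Variables G H A M : {group gT}.
Hypotheses (sMG : M \subset G) (sAG : A \subset G) (pHA : H \proper A).
Hypothesis meetMA : M :&: A = H.

Lemma atom_sub_overgroup :
  interval_distributive H G ->
  (forall B : {group gT}, H \proper B -> B \subset A -> B :=: A) ->
  (forall B : {group gT}, H \subset B -> B \subset G -> B :&: A = H ->
     M \subset B -> B :=: M) ->
  forall K : {group gT}, H \proper K -> K \subset G -> K :&: M = H ->
    A \subset K.
Proof.
move=> dist minA maxM K pHK sKG meetKM; have sHK := proper_sub pHK.
have sHA := proper_sub pHA; have sHM : H \subset M by rewrite -meetMA subsetIl.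
apply: contraT => nsAK.
have meetKA : K :&: A = H.
  apply/eqP; rewrite eqEsubset subsetI sHK sHA andbT.
  apply: contraT; rewrite andbT => nsKAH.
  have pHKA : H \proper (K :&: A)%G by rewrite properE subsetI sHK sHA nsKAH.
  by move: nsAK; rewrite -(minA _ pHKA (subsetIr _ _)) subsetIl.
have eqMK : (M <*> K)%g = M.
  apply: maxM; rewrite ?joing_subl ?join_subG ?sMG //=.
  - exact: subset_trans sHM (joing_subl _ _).
  - rewrite setIC (dist A M K sHA sAG sHM sMG sHK sKG) setIC meetMA.
    by rewrite setIC meetKA (joing_idPl (subxx H)).
have sKM : K \subset M by rewrite -eqMK joing_subr.
by move: pHK; rewrite -meetKM (setIidPl sKM) properxx.
Qed.

Lemma separating_irr_lift (j : Iirr M) :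
  (forall K : {group gT}, H \proper K -> K \subset G -> K :&: M = H ->
     A \subset K) ->
  separates H 'chi_j -> exists i : Iirr G, separates H 'chi_i.
Proof.
move=> atom_sub [chi_jH drop_j]; have sHA := proper_sub pHA.
have sHM : H \subset M by rewrite -meetMA subsetIl.
have drop_A := cfdot_Res1_Ind_lt (irr_char j) sHM sMG sAG _ pHA chi_jH.
rewrite setIC meetMA in drop_A.
have [i [ij_nz lt_i]] := cfdot_Res1_ltP (cfInd_char G (irr_char j)) sHA sAG
  (drop_A erefl).
have ji_nz : '['Res[M] 'chi_i, 'chi_j] != 0.
  by rewrite cfdot_Res_l cfdotC conjC_eq0.
exists i; split=> [|K pHK sKG].
  exact: le_lt_trans (cfdot_Res1_ge0 A (irr_char i)) lt_i.
have sHK := proper_sub pHK.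
have [meetKM | nmeetKM] := eqVneq (K :&: M) H.
  have sAK := atom_sub K pHK sKG meetKM.
  exact: le_lt_trans (cfdot_Res1_le (irr_char i) sAK sKG) lt_i.
have pHKM : H \proper (K :&: M)%G.
  by rewrite properEneq eq_sym nmeetKM subsetI sHK sHM.
have lt_KM : '['Res[(K :&: M)%G] ('Res[M] 'chi_i), 1]
             < '['Res[H] ('Res[M] 'chi_i), 1].
  apply/(cfdot_Res1_ltP (cfRes_char M (irr_char i)) (proper_sub pHKM)).
    exact: subsetIr.
  by exists j; split; [exact: ji_nz | exact: drop_j _ pHKM (subsetIr _ _)].
rewrite !cfResRes ?subsetIr // in lt_KM.
exact: le_lt_trans (cfdot_Res1_le (irr_char i) (subsetIl _ _) sKG) lt_KM.
Qed.

End Interval.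

Lemma separating_irr_exists (G H : {group gT}) :
  H \subset G -> interval_distributive H G ->
  exists i : Iirr G, separates H 'chi_i.
Proof.
elim: {G}_.+1 {-2}G (ltnSn #|G|) => // m IHm G leGm sHG dist.
have [pHG | nsGH] := boolP (H \proper G); last first.
  have sGH : G \subset H by move: nsGH; rewrite properE sHG negbK.
  exists 0; split=> [|K pHK sKG]; first by rewrite irr0 cfRes_cfun1 cfnorm1 ltr01.
  by have := proper_sub_trans pHK (subset_trans sKG sGH); rewrite properxx.
pose atomP (B : {group gT}) := (H \proper B) && (B \subset G).
have [A /mingroupP[/andP[pHA sAG] minA] _] := @mingroup_exists _ atomP G
  (introT andP (conj pHG (subxx G))).
pose complP (B : {group gT}) := [&& H \subset B, B \subset G & B :&: A == H].
have complH : complP H by rewrite /complP subxx sHG (setIidPl (proper_sub pHA)) /=.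
have [M /maxgroupP[/and3P[_ sMG /eqP meetMA] maxM] sHM] :=
  @maxgroup_exists _ complP H complH.
have pMG : M \proper G.
  rewrite properE sMG; apply: contraL pHA => sGM.
  by rewrite -meetMA (setIidPr (subset_trans sAG sGM)) properxx.
have [j sep_j] := IHm M (leq_trans (proper_card pMG) leGm) sHM
  (interval_distributiveS sMG dist).
apply: (separating_irr_lift sMG sAG pHA meetMA _ sep_j).
apply: atom_sub_overgroup => // [B pHB sBA | B sHB sBG meetBA sMB].
  by apply: (minA B) => //; rewrite /atomP pHB (subset_trans sBA sAG).
by apply: (maxM B) => //; rewrite /complP sHB sBG meetBA eqxx.
Qed.

End FixedDimension.

Theorem theorem1p2 (gT : finGroupType) (G H : {group gT}) :
  H \subset G -> interval_distributive H G ->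
  exists (n : nat) (rG : mx_representation algC G n),
    mx_irreducible rG /\ rstab rG (rfix_mx rG H) = H.
Proof.
move=> sHG dist; have [i [_ drop_i]] := separating_irr_exists sHG dist.
exists _, 'Chi_i; split; first exact: socle_irr.
by apply: rstab_rfix_mx_eq sHG _ => K pHK sKG; rewrite irrRepr; apply: drop_i.
Qed.
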